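(* Let $G=(V_1,V_2,E)$ be a bipartite graph, let $\delta>0$, and let $W\subset V_2$ be chosen uniformly at random among all subsets of $V_2$. Then: (i) if $x,y\in V_1$ satisfy $|\mathrm{div}(x,y)|\ge\delta|V_2|$, then $\mathbb P\big(d^W(x)=d^W(y)\big)=O_\delta(|V_2|^{-0.5})$; (ii) if $\mathbf p_1=(x_1,y_1)$ and $\mathbf p_2=(x_2,y_2)$ are ordered pairs of vertices of $V_1$ with $|\mathrm{divb}(\mathbf p_1)\setminus N(x_2)|\ge\delta|V_2|$ and $|\mathrm{divb}(\mathbf p_1)\setminus N(y_2)|\ge\delta|V_2|$, then $\mathbb P\big(d^W_{\mathbf p_1}=d^W_{\mathbf p_2}\big)=O_\delta(|V_2|^{-0.5})$. Here $O_\delta(f)$ denotes a quantity bounded by $K_\delta f$ for a constant $K_\delta$ depending only on $\delta$.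
   Context: A bipartite graph $G=(V_1,V_2,E)$ has vertex set $V_1\sqcup V_2$ and edge set $E\subset V_1\times V_2$; $N(v)$ is the neighbourhood of $v$, and for $S\subset V_2$, $d^S(v)=|N(v)\cap S|$. For $u,v\in V_1$, $\mathrm{div}(u,v)=N(u)\triangle N(v)$ and $\mathrm{divb}(u,v)$ is the larger of $N(u)\setminus N(v)$, $N(v)\setminus N(u)$ (either if equal). Ordered pairs $\mathbf p=(u,v)$ of distinct vertices are written so that $\mathrm{divb}(\mathbf p)=N(u)\setminus N(v)$, and $d^S_{\mathbf p}:=d^S(u)-d^S(v)$. *)

From HB Require Import structures.
From mathcomp Require Import all_boot all_order all_algebra.
Set Implicit Arguments. Unset Strict Implicit. Unset Printing Implicit Defensive.
Import Order.TTheory GRing.Theory Num.Theory.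

(* A bipartite graph G = (V1, V2, E) is given by its neighbourhood map
   N : V1 -> {set V2} (N v = neighbours of v in V2). *)

Section Bip.
Variables (V1 V2 : finType) (N : V1 -> {set V2}).

Definition degIn (S : {set V2}) (v : V1) : nat := #|N v :&: S|.

Definition divs (u v : V1) : {set V2} := (N u :\: N v) :|: (N v :\: N u).

Definition divb (u v : V1) : {set V2} :=
  if #|N v :\: N u| <= #|N u :\: N v| then N u :\: N v else N v :\: N u.

Definition degPair (S : {set V2}) (u v : V1) : int :=
  (degIn S u)%:Z - (degIn S v)%:Z.

End Bip.

Definition probW (R : numFieldType) (V2 : finType) (P : pred {set V2}) : R :=
  (#|[set W : {set V2} | P W]|)%:R / (2 ^ #|V2|)%:R.

From HB Require Import structures.
From mathcomp Require Import all_boot all_order all_algebra.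
From mathcomp Require Import zify ring lra.
Import Order.TTheory GRing.Theory Num.Theory.

Set Implicit Arguments.
Unset Strict Implicit.
Unset Printing Implicit Defensive.

(* Each event fixes |W ∩ S| as a function of W \ S, for a set S ⊆ V2 with
   |S| ≥ δ|V2|/2 such that every vertex involved is adjacent to all or to none
   of S: in (i) S is the larger of N(x) \ N(y) and N(y) \ N(x); in (ii) it is
   the larger of the two parts into which N(y2) cuts divb(p1) \ N(x2).
   Conditionally on W \ S, |W ∩ S| is binomial Bin(m, 1/2) with m = |S|, whose
   atoms are at most C(m, ⌊m/2⌋)/2^m ≤ (m+1)^(-1/2); hence the probability is
   at most sqrt(2/(δ|V2|)). *)

Lemma leq_bin2r m i j : i <= j -> j <= m./2 -> 'C(m, i) <= 'C(m, j).
Proof.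
elim: j => [|j IHj]; first by rewrite leqn0 => /eqP ->.
rewrite leq_eqVlt ltnS => /predU1P[-> // | le_ij lt_jm].
apply: leq_trans (IHj le_ij (ltnW lt_jm)) _.
have lt_j_mj : j < m - j by rewrite -[m in m - j]odd_double_half in lt_jm *; lia.
by rewrite -(leq_pmul2l (ltn0Sn j)) mul_bin_left leq_mul2r lt_j_mj orbT.
Qed.

Lemma leq_bin_half m k : 'C(m, k) <= 'C(m, m./2).
Proof.
have [le_km2 | lt_m2k] := leqP k m./2; first exact: leq_bin2r.
have [le_km | lt_mk] := leqP k m; last by rewrite bin_small.
rewrite -bin_sub //; apply: leq_bin2r => //.
by rewrite -[m in m - k]odd_double_half in lt_m2k *; lia.
Qed.

Lemma mul_central_binS k : k.+1 * 'C(k.+1.*2, k.+1) = 2 * k.*2.+1 * 'C(k.*2, k).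
Proof.
have := mul_bin_diag k.*2.+2 k; have := mul_bin_down k.*2.+1 k.
rewrite doubleS /= (_ : k.*2.+1 - k = k.+1); last by lia.
by move=> down <-; nia.
Qed.

Lemma central_bin_even k : 'C(k.*2, k) ^ 2 * k.*2.+1 <= 16 ^ k.
Proof.
elim: k => [// | k IHk].
rewrite -(@leq_pmul2l (k.+1 ^ 2)) // mulnA -expnMn mul_central_binS doubleS.
set c := 'C(k.*2, k).
have -> : (2 * k.*2.+1 * c) ^ 2 * k.*2.+3 = 4 * (k.*2.+1 * k.*2.+3) * (c ^ 2 * k.*2.+1).
  by rewrite !expnMn; ring.
apply: leq_trans (leq_mul (leqnn _) IHk) _.
by rewrite [16 ^ k.+1]expnS [_ * (16 * _)]mulnA leq_mul2r; apply/orP; right; lia.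
Qed.

Lemma central_bin_sqr m : 'C(m, m./2) ^ 2 * m.+1 <= 4 ^ m.
Proof.
rewrite -[m]odd_double_half; case: (odd m); set k := m./2 => /=; rewrite ?add0n.
  rewrite add1n uphalf_double.
  have := central_bin_even k.+1; rewrite doubleS [16 ^ _]expnS.
  have -> : 'C(k.*2.+2, k.+1) = 2 * 'C(k.*2.+1, k).
    apply/eqP; rewrite -(eqn_pmul2l (ltn0Sn k)) -mul_bin_diag /=.
    by rewrite -doubleS -mul2n -mulnA mulnCA.
  by rewrite [4 ^ _]expnS -mul2n expnM (_ : 4 ^ 2 = 16) //; nia.
by rewrite doubleK (_ : 4 ^ k.*2 = 16 ^ k) ?central_bin_even // -mul2n expnM.
Qed.

Section DeterminedOff.
Variables (V : finType) (S : {set V}).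

Definition determined_off (P : pred {set V}) : Prop :=
  {in P &, forall W1 W2, W1 :\: S = W2 :\: S -> #|W1 :&: S| = #|W2 :&: S|}.

Lemma determined_off_affine (P : pred {set V}) (f : {set V} -> int) (c : int) :
    c != 0%R -> (forall W, f W = f (W :\: S) + c * #|W :&: S|%:Z)%R ->
  (forall W, P W -> f W = 0%R) -> determined_off P.
Proof.
move=> c0 fE Pf0 W1 W2 /Pf0 fW1 /Pf0 fW2 eqW.
have : (c * #|W1 :&: S|%:Z = c * #|W2 :&: S|%:Z)%R.
  by apply: (addrI (f (W1 :\: S))); rewrite -fE fW1 eqW -fE fW2.
by move/(mulfI c0); case.
Qed.

Lemma card_determined_off (P : pred {set V}) :
  determined_off P -> #|[set W | P W]| <= 2 ^ #|~: S| * 'C(#|S|, #|S|./2).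
Proof.
move=> detP; rewrite -sum1_card.
rewrite (partition_big (fun W => W :\: S) (mem (powerset (~: S)))) /=; last first.
  by move=> W _; rewrite powersetE setDE subsetIr.
rewrite -card_powerset -sum1_card big_distrl /=; apply: leq_sum => T _.
rewrite mul1n sum1dep_card; set B := [set W | _].
have [-> | [W0 W0B]] := set_0Vmem B; first by rewrite cards0.
have injB : {in B &, injective (fun W => W :&: S)}.
  move=> W1 W2; rewrite !inE => /andP[_ /eqP W1T] /andP[_ /eqP W2T] eqWS.
  by rewrite -(setID W1 S) -(setID W2 S) eqWS W1T W2T.
rewrite -(card_in_imset injB); apply: leq_trans (leq_bin_half _ #|W0 :&: S|).
rewrite -cards_draws; apply: subset_leq_card; apply/subsetP => _ /imsetP[W WB ->].
move: WB W0B; rewrite !inE => /andP[PW /eqP WT] /andP[PW0 /eqP W0T].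
by rewrite subsetIr (detP _ _ PW PW0) ?WT ?W0T ?eqxx.
Qed.

Lemma card_determined_off_sqr (P : pred {set V}) :
  determined_off P -> #|[set W | P W]| ^ 2 * #|S|.+1 <= (2 ^ #|V|) ^ 2.
Proof.
move/card_determined_off; set a := #|_|; set c := 'C(_, _) => le_a.
have le_a2 : a * 2 ^ #|S| <= 2 ^ #|V| * c.
  by rewrite -(cardsC S) expnD mulnC -mulnA leq_pmul2l ?expn_gt0.
rewrite -(@leq_pmul2r ((2 ^ #|S|) ^ 2)) ?expn_gt0 // mulnAC -expnMn.
apply: leq_trans (_ : (2 ^ #|V| * c) ^ 2 * #|S|.+1 <= _).
  by rewrite leq_mul2r leq_exp2r ?le_a2 ?orbT.
have -> : (2 ^ #|S|) ^ 2 = 4 ^ #|S| by rewrite -expnM mulnC expnM.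
by rewrite expnMn -mulnA leq_mul2l central_bin_sqr orbT.
Qed.

End DeterminedOff.

Local Open Scope ring_scope.

Section Probability.
Variables (R : rcfType) (V : finType) (S : {set V}) (P : pred {set V}).
Hypothesis detP : determined_off S P.

Lemma probW_sqr_determined_off : probW R P ^+ 2 * (#|S|.+1)%:R <= 1.
Proof.
rewrite /probW expr_div_n mulrAC ler_pdivrMr ?exprn_gt0 ?ltr0n ?expn_gt0 //.
by rewrite mul1r -!natrX -natrM ler_nat card_determined_off_sqr.
Qed.

Lemma probW_mul_sqrt_le (delta : R) : 0 < delta ->
    delta * #|V|%:R <= 2 * #|S|%:R ->
  probW R P * Num.sqrt #|V|%:R <= Num.sqrt (2 / delta).
Proof.
move=> delta_gt0 le_VS; set p := probW R P.
have p_ge0 : 0 <= p by rewrite divr_ge0 ?ler0n.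
have -> : p * Num.sqrt #|V|%:R = Num.sqrt ((p * Num.sqrt #|V|%:R) ^+ 2).
  by rewrite sqrtr_sqr ger0_norm // mulr_ge0 ?sqrtr_ge0.
rewrite ler_sqrt ?divr_ge0 ?(ltW delta_gt0) // exprMn sqr_sqrtr ?ler0n //.
rewrite ler_pdivlMr //.
have := probW_sqr_determined_off; rewrite -/p -natr1 => le_p.
have : 0 <= p ^+ 2 * (2 * #|S|%:R - delta * #|V|%:R).
  by rewrite mulr_ge0 ?sqr_ge0 ?subr_ge0.
nra.
Qed.

End Probability.

Section Bipartite.
Variables (V1 V2 : finType) (N : V1 -> {set V2}).

Lemma degIn_full (S W : {set V2}) u :
  S \subset N u -> degIn N W u = (degIn N (W :\: S) u + #|W :&: S|)%N.
Proof.
move=> SNu; rewrite /degIn -(cardsID S (N u :&: W)) addnC -setIDA -setIA.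
by rewrite (setIidPr (subset_trans (subsetIr W S) SNu)).
Qed.

Lemma degIn_free (S W : {set V2}) u :
  [disjoint S & N u] -> degIn N W u = degIn N (W :\: S) u.
Proof.
move=> SNu; rewrite /degIn setIDA (setDidPl _) //.
by rewrite disjoint_sym in SNu; exact: disjointWl (subsetIl _ _) SNu.
Qed.

Lemma determined_off_degIn x y :
  determined_off (N x :\: N y) (fun W => degIn N W x == degIn N W y).
Proof.
pose f W := (degIn N W x)%:Z - (degIn N W y)%:Z.
apply: (@determined_off_affine _ _ _ f 1) => // [W | W /eqP eq_xy]; last first.
  by rewrite /f eq_xy subrr.
have dis_y : [disjoint N x :\: N y & N y] by rewrite disjoints_subset subsetDr.
rewrite /f (degIn_full W (subsetDl (N x) (N y))) (degIn_free W dis_y).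
by rewrite PoszD mul1r addrAC.
Qed.

Lemma determined_off_degPair (S : {set V2}) x1 y1 x2 y2 :
    S \subset N x1 -> [disjoint S & N y1] -> [disjoint S & N x2] ->
    (S \subset N y2) || [disjoint S & N y2] ->
  determined_off S (fun W => degPair N W x1 y1 == degPair N W x2 y2).
Proof.
move=> S_x1 S_y1 S_x2 S_y2.
pose f W := degPair N W x1 y1 - degPair N W x2 y2.
have [c c_neq0 fE] : exists2 c : int, c != 0 &
    forall W, f W = f (W :\: S) + c * #|W :&: S|%:Z.
  case/orP: S_y2 => S_y2; [exists 2 | exists 1] => // W;
    rewrite /f /degPair (degIn_full W S_x1) (degIn_free W S_y1) (degIn_free W S_x2).
    by rewrite (degIn_full W S_y2) !PoszD; ring.
  by rewrite (degIn_free W S_y2) !PoszD; ring.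
by apply: determined_off_affine c_neq0 fE _ => W /eqP eq_p; rewrite /f eq_p subrr.
Qed.

Lemma probW_degIn_eq_mul_sqrt_le (R : rcfType) (delta : R) x y :
    0 < delta -> delta * #|V2|%:R <= #|divs N x y|%:R ->
  probW R (fun W => degIn N W x == degIn N W y) * Num.sqrt #|V2|%:R
    <= Num.sqrt (2 / delta).
Proof.
move=> delta_gt0.
wlog le_yx : x y / (#|N y :\: N x| <= #|N x :\: N y|)%N => [hwlog | le_div].
  have [|/ltnW le_xy] := leqP #|N y :\: N x| #|N x :\: N y|; first exact: hwlog.
  have -> : divs N x y = divs N y x by rewrite /divs setUC.
  have -> : probW R (fun W => degIn N W x == degIn N W y)
          = probW R (fun W => degIn N W y == degIn N W x).
    by rewrite /probW; congr (_%:R / _); apply: eq_card => W; rewrite !inE eq_sym.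
  exact: hwlog.
apply: probW_mul_sqrt_le delta_gt0 _; first exact: determined_off_degIn.
apply: le_trans le_div _; rewrite -natrM ler_nat /divs.
by apply: leq_trans (leq_card_setU _ _) _; rewrite mul2n -addnn leq_add2l.
Qed.

Lemma probW_degPair_eq_mul_sqrt_le (R : rcfType) (delta : R) x1 y1 x2 y2 :
    0 < delta -> delta * #|V2|%:R <= #|N x1 :\: N y1 :\: N x2|%:R ->
  probW R (fun W => degPair N W x1 y1 == degPair N W x2 y2) * Num.sqrt #|V2|%:R
    <= Num.sqrt (2 / delta).
Proof.
set E := N x1 :\: N y1 :\: N x2 => delta_gt0 le_E.
have [S [S_E S_y2 le_ES]] : exists S : {set V2}, [/\ S \subset E,
    (S \subset N y2) || [disjoint S & N y2] & (#|E| <= 2 * #|S|)%N].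
  have := cardsID (N y2) E.
  have [le_D|/ltnW le_I] := leqP #|E :\: N y2| #|E :&: N y2|.
    by exists (E :&: N y2); rewrite subsetIl subsetIr; split; lia.
  exists (E :\: N y2); rewrite subsetDl disjoints_subset subsetDr orbT.
  by split; lia.
have E_x1y1 : E \subset N x1 :\: N y1 by exact: subsetDl.
have detS : determined_off S (fun W => degPair N W x1 y1 == degPair N W x2 y2).
  apply: (determined_off_degPair _ _ _ S_y2).
  - exact: subset_trans S_E (subset_trans E_x1y1 (subsetDl _ _)).
  - by apply: disjointWl (subset_trans S_E E_x1y1) _; rewrite disjoints_subset subsetDr.
  - by apply: disjointWl S_E _; rewrite disjoints_subset subsetDr.
apply: probW_mul_sqrt_le detS _ delta_gt0 _.
by apply: le_trans le_E _; rewrite -natrM ler_nat.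
Qed.

End Bipartite.

Theorem lemma3p2 (R : rcfType) (delta : R) (hdelta : 0 < delta) :
  exists K : R,
    (forall (V1 V2 : finType) (N : V1 -> {set V2}) (x y : V1),
        delta * (#|V2|)%:R <= (#|divs N x y|)%:R ->
        probW R (fun W : {set V2} => degIn N W x == degIn N W y)
          * Num.sqrt ((#|V2|)%:R) <= K)
    /\
    (forall (V1 V2 : finType) (N : V1 -> {set V2}) (x1 y1 x2 y2 : V1),
        x1 != y1 -> x2 != y2 ->
        divb N x1 y1 = N x1 :\: N y1 ->
        divb N x2 y2 = N x2 :\: N y2 ->
        delta * (#|V2|)%:R <= (#|divb N x1 y1 :\: N x2|)%:R ->
        delta * (#|V2|)%:R <= (#|divb N x1 y1 :\: N y2|)%:R ->
        probW R (fun W : {set V2} => degPair N W x1 y1 == degPair N W x2 y2)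
          * Num.sqrt ((#|V2|)%:R) <= K).
Proof.
exists (Num.sqrt (2 / delta)); split.
  by move=> V1 V2 N x y; exact: probW_degIn_eq_mul_sqrt_le.
(* Only the separation of divb(p1) from N(x2) is needed. *)
move=> V1 V2 N x1 y1 x2 y2 _ _ divb_p1 _ le_x2 _.
by rewrite divb_p1 in le_x2; exact: probW_degPair_eq_mul_sqrt_le.
Qed.
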